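(* In ${\rm Br}({\rm G}_2)$ the following equalities hold: $$r_0r_1e_0=e_1e_0,\qquad e_0r_1r_0=e_0e_1,\qquad e_0e_1e_0=\delta^2e_0,\qquad r_1r_0e_1r_0r_1e_0=\delta e_0.$$
   Context: Let $\delta$ be an indeterminate. ${\rm Br}({\rm G}_2)$ is the $\mathbb{Z}[\delta^{\pm1}]$-algebra generated by $r_0,r_1,e_0,e_1$ subject to the following relations: - $r_0^2=r_1^2=1$; - $r_ie_i=e_ir_i=e_i$ for $i=0,1$; - $e_0^2=\delta^3e_0$ and $e_1^2=\delta e_1$; - $r_0e_1e_0=r_1e_0$ and $e_0e_1r_0=e_0r_1$; - $e_1r_0e_1r_0e_1=e_1$ and $e_1r_0e_1r_0r_1=e_1r_0r_1r_0$; - $e_0r_1e_0=\delta^2e_0$; - $r_1r_0e_1r_0e_1=r_0r_1r_0e_1$; - $(r_1r_0)^6=1$. *)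

From mathcomp Require Import all_boot all_algebra.
Set Implicit Arguments. Unset Strict Implicit. Unset Printing Implicit Defensive.
Import GRing.Theory.
Local Open Scope ring_scope.

(* A Z[delta^{+-1}]-algebra is a (unital, associative, possibly noncommutative)
   ring A together with the image d of delta: a central invertible element
   (di is its inverse).  The scalar action of delta^k is left multiplication by d^k. *)
Definition laurent_alg (A : pzRingType) (d di : A) : Prop :=
  [/\ forall x : A, d * x = x * d, d * di = 1 & di * d = 1].

Definition BrG2_rels (A : pzRingType) (d r0 r1 e0 e1 : A) : Prop :=
  (r0 * r0 = 1 /\ r1 * r1 = 1) /\
  (r0 * e0 = e0 /\ e0 * r0 = e0 /\ r1 * e1 = e1 /\ e1 * r1 = e1) /\
  (e0 * e0 = d ^+ 3 * e0 /\ e1 * e1 = d * e1) /\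
  (r0 * e1 * e0 = r1 * e0 /\ e0 * e1 * r0 = e0 * r1) /\
  (e1 * r0 * e1 * r0 * e1 = e1 /\ e1 * r0 * e1 * r0 * r1 = e1 * r0 * r1 * r0) /\
  e0 * r1 * e0 = d ^+ 2 * e0 /\
  r1 * r0 * e1 * r0 * e1 = r0 * r1 * r0 * e1 /\
  (r1 * r0) ^+ 6 = 1.

From mathcomp Require Import all_boot all_algebra.
Import GRing.Theory.
Local Open Scope ring_scope.

(* The key is [r0 e1 e0 = r1 e0]: multiplying it by the involution [r0] gives
   [e1 e0 = r0 r1 e0], and dually [e0 e1 = e0 r1 r0].  These let [e1] be traded
   for [r0 r1] or [r1 r0] next to [e0], after which [e0 r0 = e0],
   [e0 r1 e0 = d^2 e0] and [e1^2 = d e1] finish the computations. *)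

Section BrauerG2Identities.

Variables (A : pzRingType) (d r0 r1 e0 e1 : A).

Hypothesis d_central : forall x : A, d * x = x * d.
Hypothesis r0_invol : r0 * r0 = 1.
Hypothesis r1_invol : r1 * r1 = 1.
Hypothesis e0_r0 : e0 * r0 = e0.
Hypothesis e1_sq : e1 * e1 = d * e1.
Hypothesis r0_e1_e0 : r0 * e1 * e0 = r1 * e0.
Hypothesis e0_e1_r0 : e0 * e1 * r0 = e0 * r1.
Hypothesis e0_r1_e0 : e0 * r1 * e0 = d ^+ 2 * e0.

Lemma r0_r1_e0 : r0 * r1 * e0 = e1 * e0.
Proof. by rewrite -mulrA -r0_e1_e0 !mulrA r0_invol mul1r. Qed.

Lemma e0_r1_r0 : e0 * r1 * r0 = e0 * e1.
Proof. by rewrite -e0_e1_r0 -!mulrA r0_invol mulr1. Qed.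

Lemma e0_e1_e0 : e0 * e1 * e0 = d ^+ 2 * e0.
Proof. by rewrite -mulrA -r0_r1_e0 !mulrA e0_r0. Qed.

Lemma r1_r0_e1_r0_r1_e0 : r1 * r0 * e1 * r0 * r1 * e0 = d * e0.
Proof.
have -> : r1 * r0 * e1 * r0 * r1 * e0 = r1 * r0 * (e1 * e1) * e0.
  by rewrite -(mulrA _ r1) -r0_e1_e0 !mulrA -(mulrA _ r0 r0) r0_invol mulr1.
rewrite e1_sq (mulrA (r1 * r0) d) -d_central -!mulrA.
by rewrite [r0 * _]mulrA r0_e1_e0 [r1 * (r1 * _)]mulrA r1_invol mul1r.
Qed.

End BrauerG2Identities.

Theorem lemma9p2 (A : pzRingType) (d di r0 r1 e0 e1 : A) :
  laurent_alg d di -> BrG2_rels d r0 r1 e0 e1 ->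
  [/\ r0 * r1 * e0 = e1 * e0,
      e0 * r1 * r0 = e0 * e1,
      e0 * e1 * e0 = d ^+ 2 * e0
    & r1 * r0 * e1 * r0 * r1 * e0 = d * e0].
Proof.
move=> [dC _ _] [[r00 r11] [[_ [e0r0 _]] [[_ e11] [[re1e0 e0e1r] [_ [e0r1e0 _]]]]]].
split.
- exact: r0_r1_e0 r00 re1e0.
- exact: e0_r1_r0 r00 e0e1r.
- exact: e0_e1_e0 r00 e0r0 re1e0 e0r1e0.
- exact: r1_r0_e1_r0_r1_e0 dC r00 r11 e11 re1e0.
Qed.
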